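(* Let $\beta>0$, $\gamma\in(\frac12,1)$, $c_0=\frac{(2\beta)^{1/\gamma}}{4\gamma}$, $\varkappa=\frac32-\frac1{2\gamma}$, let $\eta>0$ and $U=(0,\eta)$. For $\varepsilon\in U$ put $Z_2(\varepsilon)=\frac1{5\varepsilon^{2/3}}$, and put $Z_2(0)=+\infty$. For $\varepsilon\in U\cup\{0\}$ and $z\in[-Z_2(\varepsilon),-1]$ define $$\widehat T(z,\varepsilon)=\begin{pmatrix}0&T_{12}(z,\varepsilon)\\ T_{21}(z,\varepsilon)&0\end{pmatrix},$$ $$T_{12}(z,\varepsilon)=\int_{-Z_2(\varepsilon)}^z\frac{ds}{4s(1+i\varepsilon^{1/3}\sqrt{-s})}\exp\Big(\int_s^z\frac{2ic_0\sqrt{-\sigma}\,d\sigma}{(1-\varepsilon^{2/3}\sigma)^{\varkappa}}\Big),\quad T_{21}(z,\varepsilon)=\int_{-Z_2(\varepsilon)}^z\frac{ds}{4s(1-i\varepsilon^{1/3}\sqrt{-s})}\exp\Big(-\int_s^z\frac{2ic_0\sqrt{-\sigma}\,d\sigma}{(1-\varepsilon^{2/3}\sigma)^{\varkappa}}\Big).$$ Then there exists $c_{IV}>0$ such that $\|\widehat T(z,\varepsilon)\|<\frac{c_{IV}}{|z|^{3/2}}$ for every $\varepsilon\in U\cup\{0\}$ and $z\in[-Z_2(\varepsilon),-1]$. *)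

From Stdlib Require Import Reals.
From Coquelicot Require Import Coquelicot.
Open Scope R_scope.

(* real power x^y for x >= 0, y > 0, with the convention 0^y = 0
   (Stdlib's Rpower 0 y = 1, which would be wrong at eps = 0). *)
Definition rpow (x y : R) : R := if Rle_dec x 0 then 0 else Rpower x y.

Definition cexp (w : C) : C :=
  (RtoC (exp (Re w)) * (RtoC (cos (Im w)) + Ci * RtoC (sin (Im w))))%C.

Definition c0 (beta gamma : R) : R := Rpower (2 * beta) (1 / gamma) / (4 * gamma).
Definition kappa (gamma : R) : R := 3 / 2 - 1 / (2 * gamma).

(* Z_2(eps) = 1 / (5 eps^{2/3}) for eps > 0 (eps = 0 means Z_2 = +oo, handled separately) *)
Definition Z2 (eps : R) : R := 1 / (5 * rpow eps (2 / 3)).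

Definition inner (beta gamma eps s z : R) : C :=
  RInt (V := C_R_CompleteNormedModule)
    (fun sigma : R => (2 * Ci * RtoC (c0 beta gamma) * RtoC (sqrt (- sigma))
       / RtoC (Rpower (1 - rpow eps (2 / 3) * sigma) (kappa gamma)))%C) s z.

Definition f12 (beta gamma eps z : R) (s : R) : C :=
  (cexp (inner beta gamma eps s z)
     / (4 * RtoC s * (1 + Ci * RtoC (rpow eps (1 / 3)) * RtoC (sqrt (- s)))))%C.
Definition f21 (beta gamma eps z : R) (s : R) : C :=
  (cexp (- inner beta gamma eps s z)
     / (4 * RtoC s * (1 - Ci * RtoC (rpow eps (1 / 3)) * RtoC (sqrt (- s)))))%C.

Definition is_T (eps z : R) (f : R -> C) (l : C) : Prop :=
  if Req_EM_T eps 0 then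
    is_RInt_gen (V := C_R_CompleteNormedModule) f (Rbar_locally m_infty) (at_point z) l
  else is_RInt (V := C_R_CompleteNormedModule) f (- Z2 eps) z l.

(* norm of the antidiagonal matrix [[0, a], [b, 0]]: max of the moduli of the
   entries (this is both the max-entry norm and the operator 2-norm here) *)
Definition antidiag_norm (a b : C) : R := Rmax (Cmod a) (Cmod b).

Definition in_range (eps z : R) : Prop :=
  z <= -1 /\ (eps = 0 \/ - Z2 eps <= z).

From Stdlib Require Import Reals Lra.
From Coquelicot Require Import Coquelicot.
Open Scope R_scope.

(* The inner integral is i Phi(s) with Phi real and Phi' = - g, where g > 0 is the phase
   density, so both integrands have the form (A + i B) g exp(+- i Phi) with real amplitudes
   A ~ |s|^(-3/2) and B ~ eps^(1/3) |s|^(-1) whose derivatives have constant sign.  As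
   g exp(i Phi) is a multiple of the derivative of exp(i Phi), an integration by parts bounds
   the integral over [a, b] by a multiple of |A| + |B| at the endpoints, the remaining integral
   being controlled by the total variation of the monotone amplitude.  On [-Z2(eps), z] we have
   eps^(2/3) |s| <= 1/5, so |B| is also O(|s|^(-3/2)), and all bounds are
   O(|b|^(-3/2) / c0) uniformly in eps.  For eps = 0 the same estimate on [a, b] is a Cauchy
   criterion at -oo, so the improper integrals exist and satisfy the bound. *)

Lemma continuous_of_is_derive (f : R -> R) (x l : R) :
  is_derive f x l -> continuous f x.
Proof.
  intros hf. apply (ex_derive_continuous (V := R_NormedModule)). now exists l.
Qed.

Lemma ex_RInt_of_continuous (f : R -> R) (a b : R) :
  a <= b -> (forall x, a <= x <= b -> continuous f x) -> ex_RInt f a b.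
Proof.
  intros hab hf. apply (ex_RInt_continuous (V := R_CompleteNormedModule)).
  rewrite Rmin_left, Rmax_right by exact hab. exact hf.
Qed.

Lemma Rabs_sin_le_1 (y : R) : Rabs (sin y) <= 1.
Proof. apply Rabs_le, SIN_bound. Qed.

Lemma Rabs_opp_cos_le_1 (y : R) : Rabs (- cos y) <= 1.
Proof. rewrite Rabs_Ropp. apply Rabs_le, COS_bound. Qed.

Lemma is_derive_opp_cos (y : R) : is_derive (fun y => - cos y) y (sin y).
Proof. auto_derive; [exact I | ring]. Qed.

Lemma is_RInt_by_parts (u u' v v' : R -> R) (a b : R) :
  a <= b ->
  (forall x, a <= x <= b -> is_derive u x (u' x)) ->
  (forall x, a <= x <= b -> is_derive v x (v' x)) ->
  (forall x, a <= x <= b -> continuous u' x) ->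
  (forall x, a <= x <= b -> continuous v' x) ->
  is_RInt (fun x => u x * v' x) a b
    (u b * v b - u a * v a - RInt (fun x => u' x * v x) a b).
Proof.
  intros hab hu hv hu' hv'.
  assert (hin : forall x, Rmin a b <= x <= Rmax a b -> a <= x <= b)
    by (rewrite Rmin_left, Rmax_right by exact hab; auto).
  assert (hprod : is_RInt (fun x => u' x * v x + u x * v' x) a b
                    (minus (u b * v b) (u a * v a))).
  { apply (is_RInt_derive (fun x => u x * v x)); intros x hx; apply hin in hx.
    - apply (is_derive_mult u v); auto. intros; apply Rmult_comm.
    - apply (continuous_plus (fun x => u' x * v x) (fun x => u x * v' x));
        apply (continuous_mult (K := R_AbsRing)); auto;
        eapply continuous_of_is_derive; eauto. }
  assert (hu'v : ex_RInt (fun x => u' x * v x) a b).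
  { apply ex_RInt_of_continuous; auto. intros x hx.
    apply (continuous_mult u' v); auto. eapply continuous_of_is_derive; eauto. }
  eapply is_RInt_ext, (is_RInt_minus _ _ _ _ _ _ hprod (RInt_correct _ _ _ hu'v)).
  intros x _. unfold minus, plus, opp; simpl. ring.
Qed.

Lemma RInt_weighted_derive_bound (u u' k : R -> R) (a b : R) :
  a <= b ->
  (forall x, a <= x <= b -> is_derive u x (u' x)) ->
  (forall x, a <= x <= b -> continuous u' x) ->
  (forall x, a <= x <= b -> continuous k x) ->
  (forall x, a <= x <= b -> Rabs (k x) <= 1) ->
  (forall x, a <= x <= b -> 0 <= u' x) \/ (forall x, a <= x <= b -> u' x <= 0) ->
  Rabs (RInt (fun x => u' x * k x) a b) <= Rabs (u b - u a).
Proof.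
  intros hab hu hu' hk hk1 hsign.
  assert (hin : forall x, Rmin a b <= x <= Rmax a b -> a <= x <= b)
    by (rewrite Rmin_left, Rmax_right by exact hab; auto).
  assert (hu'int : is_RInt u' a b (u b - u a)).
  { apply (is_RInt_derive (V := R_CompleteNormedModule)); intros x hx; apply hin in hx; auto. }
  assert (huk : is_RInt (fun x => u' x * k x) a b (RInt (fun x => u' x * k x) a b)).
  { apply (RInt_correct (V := R_CompleteNormedModule)), ex_RInt_of_continuous; auto.
    intros x hx.
    apply (continuous_mult u' k); auto. }
  assert (habs : forall x, a <= x <= b -> Rabs (u' x * k x) <= Rabs (u' x)).
  { intros x hx. rewrite Rabs_mult.
    pose proof (hk1 x hx). pose proof (Rabs_pos (u' x)). nra. }
  destruct hsign as [hpos | hneg].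
  - assert (hdom : forall x, a <= x <= b -> norm (u' x * k x) <= u' x).
    { intros x hx. rewrite <- (Rabs_pos_eq (u' x)) at 2 by auto. exact (habs x hx). }
    eapply Rle_trans; [exact (norm_RInt_le _ _ a b _ _ hab hdom huk hu'int) | apply Rle_abs].
  - assert (hdom : forall x, a <= x <= b -> norm (u' x * k x) <= - u' x).
    { intros x hx. rewrite <- (Rabs_left1 (u' x)) by auto. exact (habs x hx). }
    eapply Rle_trans;
      [exact (norm_RInt_le _ _ a b _ _ hab hdom huk (is_RInt_opp _ _ _ _ hu'int)) |].
    rewrite <- Rabs_Ropp. apply Rle_abs.
Qed.

Lemma oscillatory_RInt_bound (u u' g Phi W w : R -> R) (a b : R) :
  a <= b ->
  (forall x, a <= x <= b -> is_derive u x (u' x)) ->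
  (forall x, a <= x <= b -> continuous u' x) ->
  (forall x, a <= x <= b -> 0 <= u' x) \/ (forall x, a <= x <= b -> u' x <= 0) ->
  (forall x, a <= x <= b -> is_derive Phi x (- g x)) ->
  (forall x, a <= x <= b -> continuous g x) ->
  (forall y, is_derive W y (w y)) ->
  (forall y, continuous w y) ->
  (forall y, Rabs (W y) <= 1) ->
  exists L, is_RInt (fun x => u x * g x * w (Phi x)) a b L /\
    Rabs L <= 2 * (Rabs (u a) + Rabs (u b)).
Proof.
  intros hab hu hu' hsign hPhi hg hW hw hW1.
  set (I := RInt (fun x => u' x * W (Phi x)) a b).
  assert (hWPhi : forall x, a <= x <= b -> continuous (fun y => W (Phi y)) x).
  { intros x hx. apply (continuous_comp Phi W).
    - eapply continuous_of_is_derive; eauto.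
    - eapply continuous_of_is_derive; eauto. }
  exists (u a * W (Phi a) - u b * W (Phi b) + I). split.
  - assert (hparts : is_RInt (fun x => u x * (- g x * w (Phi x))) a b
                        (u b * W (Phi b) - u a * W (Phi a) - I)).
    { apply (is_RInt_by_parts u u' (fun x => W (Phi x))); auto.
      - intros x hx. apply (is_derive_comp W Phi); auto.
      - intros x hx. apply (continuous_mult (K := R_AbsRing)).
        + apply (continuous_opp g); auto.
        + apply (continuous_comp Phi w); auto. eapply continuous_of_is_derive; eauto. }
    apply is_RInt_opp in hparts.
    eapply is_RInt_ext; [| replace (u a * W (Phi a) - u b * W (Phi b) + I)
                            with (opp (u b * W (Phi b) - u a * W (Phi a) - I)); [exact hparts |]].
    + intros x _. unfold opp; simpl. ring.
    + unfold opp; simpl. ring.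
  - assert (hI : Rabs I <= Rabs (u b - u a))
      by (apply RInt_weighted_derive_bound; auto).
    assert (hbd : forall x y, Rabs (x * W y) <= Rabs x).
    { intros x y. rewrite Rabs_mult. pose proof (hW1 y). pose proof (Rabs_pos x). nra. }
    pose proof (hbd (u a) (Phi a)). pose proof (hbd (u b) (Phi b)).
    pose proof (Rabs_triang (u b) (- u a)). rewrite Rabs_Ropp in *.
    pose proof (Rabs_triang (u a * W (Phi a) - u b * W (Phi b)) I).
    pose proof (Rabs_triang (u a * W (Phi a)) (- (u b * W (Phi b)))).
    rewrite Rabs_Ropp in *. unfold Rminus in *. lra.
Qed.

Lemma is_RInt_gen_m_infty_of_bound {V : CompleteNormedModule R_AbsRing}
  (f : R -> V) (z : R) (B : R -> R) :
  (forall a b, a <= b <= z -> exists I, is_RInt f a b I /\ norm I <= B b) ->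
  (forall eps, 0 < eps -> exists M, forall x, x <= M -> B x < eps) ->
  exists l, is_RInt_gen f (Rbar_locally m_infty) (at_point z) l /\ norm l <= B z.
Proof.
  intros hI hB.
  set (F := fun a => RInt f a z).
  assert (hF : forall a, a <= z -> is_RInt f a z (F a) /\ norm (F a) <= B z).
  { intros a ha. destruct (hI a z ltac:(lra)) as [I [hfI hIB]].
    unfold F. now rewrite (is_RInt_unique _ _ _ _ hfI). }
  assert (hincr : forall u v, u <= v <= z -> norm (minus (F u) (F v)) <= B v).
  { intros u v huv. destruct (hI u v huv) as [I [hfI hIB]].
    assert (hFu : F u = plus I (F v)).
    { apply is_RInt_unique, (is_RInt_Chasles _ _ v); auto. apply hF; lra. }
    replace (minus (F u) (F v)) with I; [exact hIB |].
    rewrite hFu. unfold minus. rewrite <- plus_assoc. symmetry.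
    transitivity (plus I zero); [f_equal | apply plus_zero_r].
    (* [rewrite plus_opp_r] fails here: the group inferred from [V] is a repackaging. *)
    exact (plus_opp_r (G := CompleteNormedModule.AbelianGroup R_AbsRing V) (F v)). }
  assert (hcauchy : exists l, filterlim F (Rbar_locally m_infty) (locally l)).
  { apply filterlim_locally_cauchy. intros eps.
    destruct (hB eps (cond_pos eps)) as [M hM].
    exists (fun x => x < Rmin z M). split; [now exists (Rmin z M) |].
    intros u v hu hv. pose proof (Rmin_l z M). pose proof (Rmin_r z M).
    destruct (Rle_lt_dec u v).
    - apply ball_sym, (norm_compat1 (V := V)).
      eapply Rle_lt_trans; [apply hincr | apply hM]; lra.
    - apply (norm_compat1 (V := V)).
      eapply Rle_lt_trans; [apply hincr | apply hM]; lra. }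
  destruct hcauchy as [l hl]. exists l. split.
  - intros P hP. destruct (hl P hP) as [M hM].
    apply (Filter_prod _ _ _ (fun a => a < Rmin z M) (fun b => b = z));
      [now exists (Rmin z M) | reflexivity |].
    intros a b ha ->. pose proof (Rmin_l z M). pose proof (Rmin_r z M).
    exists (F a). split; [apply hF; lra | apply hM; lra].
  - change (Rbar_le (norm l) (B z)).
    apply (filterlim_le (F := Rbar_locally m_infty) (fun a => norm (F a)) (fun _ => B z)).
    + exists z. intros a ha. apply hF. lra.
    + apply (filterlim_comp _ _ _ F norm _ _ _ hl), (filterlim_norm (V := V)).
    + apply filterlim_const.
Qed.

Lemma is_RInt_Cconj (f : R -> C) (a b : R) (l : C) :
  is_RInt (V := C_R_CompleteNormedModule) f a b l ->
  is_RInt (V := C_R_CompleteNormedModule) (fun x => Cconj (f x)) a b (Cconj l).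
Proof.
  intros hf. unfold Cconj.
  apply (is_RInt_fct_extend_pair (U := R_NormedModule) (V := R_NormedModule)); simpl.
  - exact (is_RInt_fct_extend_fst _ _ _ _ hf).
  - apply (is_RInt_opp (V := R_NormedModule)). exact (is_RInt_fct_extend_snd _ _ _ _ hf).
Qed.

Lemma Rpower_sub_one (u k : R) : 0 < u -> Rpower u (k - 1) = Rpower u k / u.
Proof.
  intros hu. unfold Rminus. rewrite Rpower_plus, Rpower_Ropp, Rpower_1 by exact hu.
  reflexivity.
Qed.

Lemma Rpower_neg_three_halves (u : R) : 0 < u -> Rpower u (- (3 / 2)) = / (u * sqrt u).
Proof.
  intros hu. replace (3 / 2) with (1 + / 2) by field.
  now rewrite Rpower_Ropp, Rpower_plus, Rpower_1, Rpower_sqrt.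
Qed.

Lemma Rpower_neg_antitone (m u v : R) :
  0 <= m -> 0 < u <= v -> Rpower v (- m) <= Rpower u (- m).
Proof.
  intros hm huv. rewrite !Rpower_Ropp.
  apply Rinv_le_contravar; [apply exp_pos | apply Rle_Rpower_l; lra].
Qed.

Lemma Rpower_neg_three_halves_eventually_lt (K eps : R) :
  0 <= K -> 0 < eps -> exists M, forall x, x <= M -> K * Rpower (- x) (- (3 / 2)) < eps.
Proof.
  intros hK heps. exists (- (1 + K / eps)). intros x hx.
  assert (hKe : 0 <= K / eps) by (apply Rdiv_le_0_compat; lra).
  assert (hsq : 1 <= sqrt (- x)) by (rewrite <- sqrt_1; apply sqrt_le_1; lra).
  rewrite Rpower_neg_three_halves by lra.
  assert (hlt : K < eps * - x).
  { assert (eps * (K / eps) = K) by (field; lra). nra. }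
  apply (Rmult_lt_reg_r (- x * sqrt (- x))); [nra |].
  rewrite Rmult_assoc, Rinv_l by nra. nra.
Qed.

Lemma rpow_nonneg (x y : R) : 0 <= rpow x y.
Proof. unfold rpow. destruct (Rle_dec x 0); [lra | left; apply exp_pos]. Qed.

Lemma rpow_one_third_sqr (x : R) : rpow x (1 / 3) * rpow x (1 / 3) = rpow x (2 / 3).
Proof.
  unfold rpow. destruct (Rle_dec x 0); [ring |].
  rewrite <- Rpower_plus. f_equal. field.
Qed.

Lemma cexp_pure_imaginary (t : R) : cexp (0, t) = (cos t, sin t).
Proof. unfold cexp. apply injective_projections; simpl; rewrite exp_0; ring. Qed.

Lemma Cinv_prefactor (d s : R) :
  s < 0 ->
  (/ (4 * RtoC s * (1 + Ci * RtoC d * RtoC (sqrt (- s)))))%C =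
  (1 / (4 * s * (1 - d * d * s)), - (d * sqrt (- s)) / (4 * s * (1 - d * d * s))).
Proof.
  intros hs.
  assert (hr : 0 < sqrt (- s)) by (apply sqrt_lt_R0; lra).
  assert (hsr : s = - (sqrt (- s) * sqrt (- s))) by (rewrite sqrt_sqrt; lra).
  set (r := sqrt (- s)) in *. clearbody r. subst s.
  assert (0 <= (d * r) * (d * r)) by nra.
  unfold Cinv; apply injective_projections; simpl; field; repeat split; nra.
Qed.

Definition amplitude (K q e m s : R) : R := K * Rpower (1 - e * s) q * Rpower (- s) (- m).

Definition amplitude_deriv (K q e m s : R) : R :=
  amplitude K q e m s * (- q * e / (1 - e * s) - m / s).

Lemma is_derive_amplitude (K q e m s : R) :
  0 <= e -> s < 0 -> is_derive (amplitude K q e m) s (amplitude_deriv K q e m s).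
Proof.
  intros he hs. unfold amplitude_deriv, amplitude, Rpower.
  auto_derive; [repeat split; nra |].
  replace (1 + - (e * s)) with (1 - e * s) by ring. field. split; nra.
Qed.

Lemma continuous_amplitude_deriv (K q e m s : R) :
  0 <= e -> s < 0 -> continuous (amplitude_deriv K q e m) s.
Proof.
  intros he hs. apply (ex_derive_continuous (V := R_NormedModule)).
  unfold amplitude_deriv, amplitude, Rpower. auto_derive. repeat split; nra.
Qed.

Lemma amplitude_deriv_sign (K q e m : R) :
  q <= 0 -> 0 <= e -> 0 <= m ->
  (forall s, s < 0 -> 0 <= amplitude_deriv K q e m s) \/
  (forall s, s < 0 -> amplitude_deriv K q e m s <= 0).
Proof.
  intros hq he hm.
  assert (hlog : forall s, s < 0 -> 0 <= - q * e / (1 - e * s) - m / s).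
  { intros s hs. unfold Rdiv.
    assert (0 < / (1 - e * s)) by (apply Rinv_0_lt_compat; nra).
    assert (/ s < 0) by (apply Rinv_lt_0_compat; lra).
    assert (0 <= - q * e) by nra. nra. }
  assert (hpow : forall s, 0 < Rpower (1 - e * s) q * Rpower (- s) (- m))
    by (intros; unfold Rpower; apply Rmult_lt_0_compat; apply exp_pos).
  unfold amplitude_deriv, amplitude.
  destruct (Rle_dec 0 K); [left | right]; intros s hs;
    specialize (hlog s hs); specialize (hpow s); rewrite (Rmult_assoc K);
    set (L := - q * e / (1 - e * s) - m / s) in *;
    set (P := Rpower (1 - e * s) q * Rpower (- s) (- m)) in *;
    [assert (0 <= K * P) | assert (K * P <= 0)]; nra.
Qed.

Lemma amplitude_abs_le (K q e m s : R) :
  q <= 0 -> 0 <= e -> s < 0 -> Rabs (amplitude K q e m s) <= Rabs K * Rpower (- s) (- m).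
Proof.
  intros hq he hs. unfold amplitude.
  assert (h1 : Rpower (1 - e * s) q <= 1).
  { rewrite <- (Rpower_O (1 - e * s)) at 2 by nra. apply Rle_Rpower; nra. }
  assert (h0 : 0 < Rpower (1 - e * s) q) by apply exp_pos.
  assert (hm : 0 < Rpower (- s) (- m)) by apply exp_pos.
  rewrite !Rabs_mult, (Rabs_pos_eq (Rpower _ q)), (Rabs_pos_eq (Rpower _ (- m))) by lra.
  assert (0 <= Rabs K * Rpower (- s) (- m)) by (pose proof (Rabs_pos K); nra).
  replace (Rabs K * Rpower (1 - e * s) q * Rpower (- s) (- m))
    with (Rabs K * Rpower (- s) (- m) * Rpower (1 - e * s) q) by ring.
  nra.
Qed.

Definition phase_density (c e k s : R) : R := 2 * c * sqrt (- s) / Rpower (1 - e * s) k.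

Lemma continuous_phase_density (c e k s : R) :
  0 <= e -> s < 0 -> continuous (phase_density c e k) s.
Proof.
  intros he hs. apply (ex_derive_continuous (V := R_NormedModule)).
  unfold phase_density, Rpower. auto_derive.
  repeat split; [lra | nra | apply Rgt_not_eq, exp_pos].
Qed.

Lemma is_derive_phase (c e k z s : R) :
  0 <= e -> s < 0 -> z < 0 ->
  is_derive (fun a => RInt (phase_density c e k) a z) s (- phase_density c e k s).
Proof.
  intros he hs hz.
  apply (is_derive_RInt' (V := R_NormedModule) _ _ s z).
  - exists (mkposreal (- s / 2) ltac:(lra)). intros y hy.
    apply (RInt_correct (V := R_CompleteNormedModule)),
      (ex_RInt_continuous (V := R_CompleteNormedModule)).
    intros x hx. apply continuous_phase_density; auto.
    apply Rabs_lt_between in hy.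
    unfold minus, plus, opp in hy; simpl in hy.
    destruct hx as [_ hx]. eapply Rle_lt_trans; [exact hx |]. apply Rmax_case; lra.
  - apply continuous_phase_density; auto.
Qed.

Lemma amplitude_mul_phase_density_re (c k e s : R) :
  0 < c -> 0 <= e -> s < 0 ->
  amplitude (- / (8 * c)) (k - 1) e (3 / 2) s * phase_density c e k s =
  1 / (4 * s * (1 - e * s)).
Proof.
  intros hc he hs. unfold amplitude, phase_density.
  assert (hu : 0 < 1 - e * s) by nra.
  assert (hr : 0 < sqrt (- s)) by (apply sqrt_lt_R0; lra).
  assert (0 < Rpower (1 - e * s) k) by apply exp_pos.
  rewrite Rpower_sub_one by exact hu.
  rewrite Rpower_neg_three_halves by lra.
  field. repeat split; lra.
Qed.

Lemma amplitude_mul_phase_density_im (c k e d s : R) :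
  0 < c -> 0 <= e -> s < 0 ->
  amplitude (d / (8 * c)) (k - 1) e 1 s * phase_density c e k s =
  - (d * sqrt (- s)) / (4 * s * (1 - e * s)).
Proof.
  intros hc he hs. unfold amplitude, phase_density.
  assert (hu : 0 < 1 - e * s) by nra.
  assert (0 < Rpower (1 - e * s) k) by apply exp_pos.
  rewrite Rpower_sub_one, Rpower_Ropp, Rpower_1 by lra.
  field. repeat split; lra.
Qed.

Lemma inner_eq (beta gamma eps s z : R) :
  s < 0 -> z < 0 ->
  inner beta gamma eps s z =
  (0, RInt (phase_density (c0 beta gamma) (rpow eps (2 / 3)) (kappa gamma)) s z).
Proof.
  intros hs hz. unfold inner.
  set (g := phase_density (c0 beta gamma) (rpow eps (2 / 3)) (kappa gamma)).
  rewrite (RInt_ext (V := C_R_CompleteNormedModule) _ (fun sigma => (0, g sigma))).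
  2: { intros x _. assert (0 < Rpower (1 - rpow eps (2 / 3) * x) (kappa gamma)) by apply exp_pos.
       apply injective_projections; simpl; unfold g, phase_density; field; lra. }
  apply (is_RInt_unique (V := C_R_CompleteNormedModule)).
  apply (is_RInt_fct_extend_pair (U := R_NormedModule) (V := R_NormedModule)); simpl.
  - pose proof (is_RInt_const (V := R_NormedModule) s z 0) as hconst.
    unfold scal in hconst; simpl in hconst; unfold mult in hconst; simpl in hconst.
    now rewrite Rmult_0_r in hconst.
  - apply (RInt_correct (V := R_CompleteNormedModule)),
      (ex_RInt_continuous (V := R_CompleteNormedModule)).
    intros x hx. apply continuous_phase_density; [apply rpow_nonneg |].
    destruct hx as [_ hx]. eapply Rle_lt_trans; [exact hx |]. apply Rmax_case; lra.
Qed.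

Lemma c0_pos (beta gamma : R) : 0 < gamma -> 0 < c0 beta gamma.
Proof.
  intros hgamma. unfold c0. apply Rdiv_lt_0_compat; [apply exp_pos | lra].
Qed.

Lemma kappa_le_1 (gamma : R) : 0 < gamma <= 1 -> kappa gamma <= 1.
Proof.
  intros hgamma. unfold kappa.
  assert (1 / 2 <= 1 / (2 * gamma)) by (apply Rmult_le_compat_l, Rinv_le_contravar; lra).
  lra.
Qed.

Section Integrands.

Variables beta gamma eps z : R.
Hypothesis hc : 0 < c0 beta gamma.
Hypothesis hz : z < 0.
Hypothesis hk : kappa gamma <= 1.

Local Notation c := (c0 beta gamma).
Local Notation k := (kappa gamma).
Local Notation e := (rpow eps (2 / 3)).
Local Notation d := (rpow eps (1 / 3)).
Local Notation g := (phase_density c e k).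
Local Notation Phi s := (RInt g s z).
(* [A s * g s + i B s * g s] is the prefactor [/ (4 s (1 + i d sqrt (- s)))] of [f12]. *)
Local Notation A := (amplitude (- / (8 * c)) (k - 1) e (3 / 2)).
Local Notation B := (amplitude (d / (8 * c)) (k - 1) e 1).

Lemma f12_eq (s : R) :
  s < 0 ->
  f12 beta gamma eps z s =
  (A s * g s * cos (Phi s) - B s * g s * sin (Phi s),
   A s * g s * sin (Phi s) + B s * g s * cos (Phi s)).
Proof.
  intros hs. pose proof (rpow_nonneg eps (2 / 3)).
  unfold f12, Cdiv. rewrite inner_eq, cexp_pure_imaginary, Cinv_prefactor by lra.
  rewrite rpow_one_third_sqr, amplitude_mul_phase_density_re,
    amplitude_mul_phase_density_im by lra.
  apply injective_projections; simpl; ring.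
Qed.

Lemma f21_eq_Cconj (s : R) : s < 0 -> f21 beta gamma eps z s = Cconj (f12 beta gamma eps z s).
Proof.
  intros hs.
  assert (hflip : (1 - Ci * RtoC d * RtoC (sqrt (- s)) = 1 + Ci * RtoC (- d) * RtoC (sqrt (- s)))%C)
    by (apply injective_projections; simpl; ring).
  unfold f21, f12, Cdiv. rewrite hflip, inner_eq by lra.
  replace (- (0, Phi s))%C with (0, - Phi s)
    by (apply injective_projections; simpl; ring).
  rewrite !cexp_pure_imaginary, !Cinv_prefactor, cos_neg, sin_neg by lra.
  replace (- d * - d) with (d * d) by ring.
  unfold Cconj, Rdiv; apply injective_projections; simpl; ring.
Qed.

Lemma amplitude_oscillatory_bound (K m a b : R) (W w : R -> R) :
  0 <= m -> a <= b -> b < 0 ->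
  (forall y, is_derive W y (w y)) -> (forall y, continuous w y) ->
  (forall y, Rabs (W y) <= 1) ->
  exists L, is_RInt (fun x => amplitude K (k - 1) e m x * g x * w (Phi x)) a b L /\
    Rabs L <= 2 * (Rabs (amplitude K (k - 1) e m a) + Rabs (amplitude K (k - 1) e m b)).
Proof.
  intros hm hab hb hW hw hW1. pose proof (rpow_nonneg eps (2 / 3)) as he.
  apply (oscillatory_RInt_bound _ (amplitude_deriv K (k - 1) e m) _ _ W w); auto.
  - intros x hx. apply is_derive_amplitude; lra.
  - intros x hx. apply continuous_amplitude_deriv; lra.
  - destruct (amplitude_deriv_sign K (k - 1) e m) as [hpos | hneg]; try lra;
      [left | right]; intros x hx; [apply hpos | apply hneg]; lra.
  - intros x hx. apply is_derive_phase; lra.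
  - intros x hx. apply continuous_phase_density; lra.
Qed.

Lemma amplitude_re_abs_le (x : R) :
  x < 0 -> Rabs (A x) <= / (8 * c) * Rpower (- x) (- (3 / 2)).
Proof.
  intros hx. pose proof (rpow_nonneg eps (2 / 3)).
  eapply Rle_trans; [apply amplitude_abs_le; lra |].
  rewrite Rabs_Ropp, Rabs_pos_eq; [lra |]. left; apply Rinv_0_lt_compat; lra.
Qed.

Lemma amplitude_im_abs_le (x : R) :
  x < 0 -> e * (- x) <= 1 -> Rabs (B x) <= / (8 * c) * Rpower (- x) (- (3 / 2)).
Proof.
  intros hx hex. pose proof (rpow_nonneg eps (1 / 3)) as hd.
  eapply Rle_trans; [apply amplitude_abs_le; [lra | apply rpow_nonneg | lra] |].
  assert (hr : 0 < sqrt (- x)) by (apply sqrt_lt_R0; lra).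
  assert (hdr : d * sqrt (- x) <= 1).
  { rewrite <- rpow_one_third_sqr in hex. rewrite <- (sqrt_sqrt (- x)) in hex by lra. nra. }
  rewrite Rpower_Ropp, Rpower_1, Rpower_neg_three_halves by lra.
  rewrite Rabs_pos_eq by (apply Rmult_le_pos; [lra | left; apply Rinv_0_lt_compat; lra]).
  replace (d / (8 * c) * / - x) with (/ (8 * c) * / (- x * sqrt (- x)) * (d * sqrt (- x)))
    by (field; lra).
  assert (0 < / (8 * c) * / (- x * sqrt (- x))).
  { apply Rmult_lt_0_compat; apply Rinv_0_lt_compat; nra. }
  nra.
Qed.

Lemma f12_interval_bound (a b : R) :
  a <= b -> b < 0 -> e * (- a) <= 1 ->
  exists T, is_RInt (V := C_R_CompleteNormedModule) (f12 beta gamma eps z) a b T /\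
    Cmod T <= sqrt 2 / c * Rpower (- b) (- (3 / 2)).
Proof.
  intros hab hb hea.
  destruct (amplitude_oscillatory_bound (- / (8 * c)) (3 / 2) a b sin cos ltac:(lra) hab hb
    is_derive_sin continuous_cos Rabs_sin_le_1) as [Lac [hac bac]].
  destruct (amplitude_oscillatory_bound (- / (8 * c)) (3 / 2) a b (fun y => - cos y) sin
    ltac:(lra) hab hb is_derive_opp_cos continuous_sin Rabs_opp_cos_le_1) as [Las [has bas]].
  destruct (amplitude_oscillatory_bound (d / (8 * c)) 1 a b sin cos ltac:(lra) hab hb
    is_derive_sin continuous_cos Rabs_sin_le_1) as [Lbc [hbc bbc]].
  destruct (amplitude_oscillatory_bound (d / (8 * c)) 1 a b (fun y => - cos y) sin
    ltac:(lra) hab hb is_derive_opp_cos continuous_sin Rabs_opp_cos_le_1) as [Lbs [hbs bbs]].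
  set (W := Rpower (- b) (- (3 / 2))).
  assert (hW : Rpower (- a) (- (3 / 2)) <= W) by (apply Rpower_neg_antitone; lra).
  assert (hAa := amplitude_re_abs_le a ltac:(lra)).
  assert (hAb := amplitude_re_abs_le b hb).
  assert (hBa := amplitude_im_abs_le a ltac:(lra) hea).
  assert (hBb := amplitude_im_abs_le b hb ltac:(pose proof (rpow_nonneg eps (2 / 3)); nra)).
  assert (hc8 : 0 < / (8 * c)) by (apply Rinv_0_lt_compat; lra).
  assert (hterm : forall L u, Rabs L <= 2 * (Rabs (u a) + Rabs (u b)) ->
            Rabs (u a) <= / (8 * c) * Rpower (- a) (- (3 / 2)) ->
            Rabs (u b) <= / (8 * c) * W -> Rabs L <= / c * W / 2).
  { intros L u hL hua hub. replace (/ c * W / 2) with (4 * (/ (8 * c) * W)) by (field; lra).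
    pose proof (Rmult_le_compat_l _ _ _ (Rlt_le _ _ hc8) hW). lra. }
  exists (Lac - Lbs, Las + Lbc). split.
  - eapply is_RInt_ext.
    { intros x hx. rewrite Rmin_left, Rmax_right in hx by lra.
      symmetry. apply f12_eq. lra. }
    apply (is_RInt_fct_extend_pair (U := R_NormedModule) (V := R_NormedModule)); simpl.
    + apply (is_RInt_minus (V := R_NormedModule)); [exact hac | exact hbs].
    + apply (is_RInt_plus (V := R_NormedModule)); [exact has | exact hbc].
  - eapply Rle_trans; [apply Cmod_2Rmax |]. simpl.
    assert (h1 := hterm _ _ bac hAa hAb). assert (h2 := hterm _ _ bas hAa hAb).
    assert (h3 := hterm _ _ bbc hBa hBb). assert (h4 := hterm _ _ bbs hBa hBb).
    assert (hre : Rabs (Lac - Lbs) <= / c * W).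
    { eapply Rle_trans; [apply Rabs_triang |]. rewrite Rabs_Ropp. lra. }
    assert (him : Rabs (Las + Lbc) <= / c * W).
    { eapply Rle_trans; [apply Rabs_triang |]. lra. }
    unfold Rdiv. rewrite Rmult_assoc.
    apply Rmult_le_compat_l; [apply sqrt_pos |]. now apply Rmax_lub.
Qed.

Lemma f21_is_RInt (a b : R) (T : C) :
  a <= b -> b < 0 ->
  is_RInt (V := C_R_CompleteNormedModule) (f12 beta gamma eps z) a b T ->
  is_RInt (V := C_R_CompleteNormedModule) (f21 beta gamma eps z) a b (Cconj T).
Proof.
  intros hab hb hT. eapply is_RInt_ext; [| exact (is_RInt_Cconj _ _ _ _ hT)].
  intros x hx. rewrite Rmin_left, Rmax_right in hx by lra.
  symmetry. apply f21_eq_Cconj. lra.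
Qed.

Lemma T_entries_bound :
  0 < eps -> - Z2 eps <= z ->
  exists T12 T21,
    is_RInt (V := C_R_CompleteNormedModule) (f12 beta gamma eps z) (- Z2 eps) z T12 /\
    is_RInt (V := C_R_CompleteNormedModule) (f21 beta gamma eps z) (- Z2 eps) z T21 /\
    Cmod T12 <= sqrt 2 / c * Rpower (- z) (- (3 / 2)) /\
    Cmod T21 <= sqrt 2 / c * Rpower (- z) (- (3 / 2)).
Proof.
  intros heps hZ.
  assert (he : 0 < e) by (unfold rpow; destruct (Rle_dec eps 0); [lra | apply exp_pos]).
  assert (hZe : e * - - Z2 eps <= 1) by (unfold Z2; field_simplify; lra).
  destruct (f12_interval_bound (- Z2 eps) z hZ hz hZe) as [T [hT hTB]].
  exists T, (Cconj T). rewrite Cmod_conj. repeat split; auto.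
  apply f21_is_RInt; auto.
Qed.

Lemma T_entries_improper_bound :
  eps = 0 ->
  exists T12 T21,
    is_RInt_gen (V := C_R_CompleteNormedModule) (f12 beta gamma eps z)
      (Rbar_locally m_infty) (at_point z) T12 /\
    is_RInt_gen (V := C_R_CompleteNormedModule) (f21 beta gamma eps z)
      (Rbar_locally m_infty) (at_point z) T21 /\
    Cmod T12 <= sqrt 2 / c * Rpower (- z) (- (3 / 2)) /\
    Cmod T21 <= sqrt 2 / c * Rpower (- z) (- (3 / 2)).
Proof.
  intros heps0.
  assert (he : e = 0) by (rewrite heps0; unfold rpow; destruct (Rle_dec 0 0); lra).
  set (bound := fun b => sqrt 2 / c * Rpower (- b) (- (3 / 2))).
  assert (hdecay : forall r, 0 < r -> exists M, forall x, x <= M -> bound x < r).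
  { intros. apply Rpower_neg_three_halves_eventually_lt; auto.
    apply Rdiv_le_0_compat; [apply sqrt_pos | lra]. }
  destruct (is_RInt_gen_m_infty_of_bound (V := C_R_CompleteNormedModule)
    (f12 beta gamma eps z) z bound) as [T12 [h12 b12]]; auto.
  { intros a b hab. destruct (f12_interval_bound a b ltac:(lra) ltac:(lra) ltac:(rewrite he; lra))
      as [T [hT hTB]].
    exists T. rewrite <- Cmod_norm. auto. }
  destruct (is_RInt_gen_m_infty_of_bound (V := C_R_CompleteNormedModule)
    (f21 beta gamma eps z) z bound) as [T21 [h21 b21]]; auto.
  { intros a b hab. destruct (f12_interval_bound a b ltac:(lra) ltac:(lra) ltac:(rewrite he; lra))
      as [T [hT hTB]].
    exists (Cconj T). rewrite <- Cmod_norm, Cmod_conj. split; auto.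
    apply f21_is_RInt; auto; lra. }
  rewrite <- Cmod_norm in b12, b21. now exists T12, T21.
Qed.

End Integrands.

Lemma antidiag_norm_lt (c z : R) (T12 T21 : C) :
  0 < c -> z < 0 ->
  Cmod T12 <= sqrt 2 / c * Rpower (- z) (- (3 / 2)) ->
  Cmod T21 <= sqrt 2 / c * Rpower (- z) (- (3 / 2)) ->
  antidiag_norm T12 T21 < 2 / c / Rpower (Rabs z) (3 / 2).
Proof.
  intros hc hz h12 h21.
  assert (hsqrt2 : sqrt 2 < 2).
  { rewrite <- (sqrt_square 2) at 2 by lra. apply sqrt_lt_1; lra. }
  assert (hW : 0 < Rpower (- z) (- (3 / 2))) by apply exp_pos.
  assert (hlt : sqrt 2 / c * Rpower (- z) (- (3 / 2)) < 2 / c / Rpower (Rabs z) (3 / 2)).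
  { rewrite Rabs_left, Rpower_Ropp by lra. unfold Rdiv.
    apply Rmult_lt_compat_r; [apply Rinv_0_lt_compat, exp_pos |].
    apply Rmult_lt_compat_r; [apply Rinv_0_lt_compat |]; lra. }
  unfold antidiag_norm. apply Rmax_lub_lt; lra.
Qed.

Theorem lemma8p6 (beta gamma eta : R) (hbeta : 0 < beta)
  (hgamma : 1 / 2 < gamma /\ gamma < 1) (heta : 0 < eta) :
  exists cIV : R, 0 < cIV /\
    forall eps z : R, 0 <= eps < eta -> in_range eps z ->
      exists T12 T21 : C,
        is_T eps z (f12 beta gamma eps z) T12 /\
        is_T eps z (f21 beta gamma eps z) T21 /\
        antidiag_norm T12 T21 < cIV / Rpower (Rabs z) (3 / 2).
Proof.
  assert (hc : 0 < c0 beta gamma) by (apply c0_pos; lra).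
  assert (hk : kappa gamma <= 1) by (apply kappa_le_1; lra).
  exists (2 / c0 beta gamma). split; [apply Rdiv_lt_0_compat; lra |].
  intros eps z heps [hz hrange]. unfold is_T.
  destruct (Req_EM_T eps 0) as [heps0 | heps0].
  - destruct (T_entries_improper_bound beta gamma eps z hc ltac:(lra) hk heps0)
      as (T12 & T21 & h12 & h21 & b12 & b21).
    exists T12, T21. repeat split; auto. apply antidiag_norm_lt; auto; lra.
  - destruct hrange as [heps0' | hZ]; [contradiction |].
    destruct (T_entries_bound beta gamma eps z hc ltac:(lra) hk ltac:(lra) hZ)
      as (T12 & T21 & h12 & h21 & b12 & b21).
    exists T12, T21. repeat split; auto. apply antidiag_norm_lt; auto; lra.
Qed.
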